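(* Let $R$ be a commutative noetherian ring and $M$ an $R$-module. Then the following are equivalent: (i) $M$ is a finitely generated $R$-module; (ii) $M_\mathfrak{m}$ is a finitely generated $R_\mathfrak{m}$-module for every maximal ideal $\mathfrak{m}$ of $R$, and for every finitely generated submodule $N\subseteq M$ the set $\operatorname{Min}_R(M/N)$ of minimal elements of $\operatorname{Supp}_R(M/N)$ is finite.
   Context: $\operatorname{Min}_R(X)$ denotes the set of minimal prime ideals in the support $\operatorname{Supp}_R(X)$ of an $R$-module $X$. *)

From HB Require Import structures.
From mathcomp Require Import all_boot all_order all_algebra.
Set Implicit Arguments. Unset Strict Implicit. Unset Printing Implicit Defensive.
Import GRing.Theory.
Local Open Scope ring_scope.

Section CommAlg.
Variable R : comPzRingType.
Variable M : lmodType R.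

Definition is_ideal (I : R -> Prop) : Prop :=
  [/\ I 0, (forall a b, I a -> I b -> I (a + b)) & (forall r a, I a -> I (r * a))].

Definition ideal_fg (I : R -> Prop) : Prop :=
  exists n (g : 'I_n -> R), forall x,
    I x <-> exists c : 'I_n -> R, x = \sum_(i < n) c i * g i.

Definition noetherian : Prop := forall I, is_ideal I -> ideal_fg I.

Definition is_prime (P : R -> Prop) : Prop :=
  [/\ is_ideal P, ~ P 1 & forall a b, P (a * b) -> P a \/ P b].

Definition is_maximal (m : R -> Prop) : Prop :=
  [/\ is_ideal m, ~ m 1 &
      forall J, is_ideal J -> (forall x, m x -> J x) ->
        (forall x, J x <-> m x) \/ J 1].

Definition is_submod (N : M -> Prop) : Prop :=
  [/\ N 0, (forall x y, N x -> N y -> N (x + y)) & (forall r x, N x -> N (r *: x))].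

Definition submod_fg (N : M -> Prop) : Prop :=
  exists n (g : 'I_n -> M), forall y,
    N y <-> exists c : 'I_n -> R, y = \sum_(i < n) c i *: g i.

Definition module_fg : Prop :=
  exists n (g : 'I_n -> M), forall y, exists c : 'I_n -> R, y = \sum_(i < n) c i *: g i.

(* Localization M_p at a prime p: fractions x/s (pairs (x,s), s \notin p)
   modulo (x,s) ~ (y,t) iff u (t x - s y) = 0 for some u \notin p. *)
Definition frac_eq (p : R -> Prop) (a b : M * R) : Prop :=
  exists u, ~ p u /\ u *: (b.2 *: a.1 - a.2 *: b.1) = 0.

Definition frac_add (a b : M * R) : M * R := (b.2 *: a.1 + a.2 *: b.1, a.2 * b.2).
Definition frac_zero : M * R := (0, 1).
(* action of the fraction r/t of R_p on x/s *)
Definition frac_scale (rt : R * R) (a : M * R) : M * R := (rt.1 *: a.1, rt.2 * a.2).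

(* M_p is a finitely generated R_p-module *)
Definition loc_fg (p : R -> Prop) : Prop :=
  exists n (g : 'I_n -> M) (d : 'I_n -> R), (forall i, ~ p (d i)) /\
    forall (y : M) (t : R), ~ p t ->
      exists (a b : 'I_n -> R), (forall i, ~ p (b i)) /\
        frac_eq p (y, t)
          (\big[frac_add/frac_zero]_(i < n) frac_scale (a i, b i) (g i, d i)).

(* (M/N)_p <> 0: some fraction (x mod N)/s is nonzero in (M/N)_p, i.e.
   there is no u \notin p with u x = 0 in M/N (i.e. u *: x \in N). *)
Definition loc_quot_nonzero (N : M -> Prop) (p : R -> Prop) : Prop :=
  exists (x : M) (s : R), ~ p s /\ forall u, ~ p u -> ~ N (u *: x).

Definition in_supp_quot (N : M -> Prop) (p : R -> Prop) : Prop :=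
  is_prime p /\ loc_quot_nonzero N p.

Definition in_min_quot (N : M -> Prop) (p : R -> Prop) : Prop :=
  in_supp_quot N p /\
  forall q, in_supp_quot N q -> (forall x, q x -> p x) -> forall x, p x -> q x.

Definition finite_ideal_set (S : (R -> Prop) -> Prop) : Prop :=
  exists n (f : 'I_n -> (R -> Prop)),
    forall p, S p -> exists i, forall x, p x <-> f i x.

End CommAlg.

(* The ring-theoretic input is noetherian induction (noeth_ind, derived from
   the ascending chain condition), which yields maximal ideals above proper
   ideals and, for every ideal J, a finite list of primes such that each prime
   over J contains one of them (primes_over).

   On the module side, suppose finitely many g_i generate M up to a
   multiplicative set U.  For primes q disjoint from U, q lies in Supp(M/N)
   iff q contains one explicit ideal (supp_ideal), so near U the support is
   governed by primes_over: every prime of the support contains a minimal one,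
   and there are finitely many minimal ones.  With U = {1} this gives
   (i) => (ii); with U = R \ m, using (a), it shows that every prime of
   Supp(M/N) lies above a prime of Min(M/N).

   For (ii) => (i), let min_meet N be the intersection of Min(M/N).  If p0 is
   in Min(M/N) and m is maximal above p0, adding generators of M_m to N gives
   a finitely generated N' with min_meet N' not inside p0 (prime avoidance
   over the finite set Min(M/N')), while min_meet N <= min_meet N'.
   Noetherian induction on min_meet N thus reaches a finitely generated N
   with Min(M/N) empty, that is N = M. *)
From HB Require Import structures.
From mathcomp Require Import all_boot all_order all_algebra.
From Stdlib Require Import Classical ClassicalEpsilon.
From Stdlib Require List.
Set Implicit Arguments. Unset Strict Implicit. Unset Printing Implicit Defensive.
Import GRing.Theory.
Local Open Scope ring_scope.

Definition included {T : Type} (A B : T -> Prop) := forall x, A x -> B x.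

Section Ideals.
Variable R : comPzRingType.
Implicit Types (I J p q : R -> Prop).

Lemma ideal_sum I n (c g : 'I_n -> R) :
  is_ideal I -> (forall i, I (g i)) -> I (\sum_(i < n) c i * g i).
Proof. by case=> I0 ID IM Ig; apply: (big_ind I) => // i _; apply: IM. Qed.

Lemma ideal_mulr I a b : is_ideal I -> I a -> I (a * b).
Proof. by case=> _ _ IM Ia; rewrite mulrC; apply: IM. Qed.

Lemma prime_mul p a b : is_prime p -> ~ p a -> ~ p b -> ~ p (a * b).
Proof. by case=> _ _ pM pa pb /pM []. Qed.

Lemma prime_prod p n (u : 'I_n -> R) :
  is_prime p -> (forall i, ~ p (u i)) -> ~ p (\prod_(i < n) u i).
Proof.
move=> pP pu; apply: (big_ind (fun x => ~ p x)) => [|x y|i _]; last exact: pu.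
- by case: pP.
- exact: prime_mul.
Qed.

Lemma noetherian_chain (c : nat -> R -> Prop) :
  noetherian R -> (forall n, is_ideal (c n)) ->
  (forall n m, (n <= m)%N -> included (c n) (c m)) ->
  exists N, forall n, included (c n) (c N).
Proof.
move=> noethR c_ideal c_mono.
(* the union is an ideal whose finitely many generators appear at some stage *)
pose U x := exists n, c n x.
have U_ideal : is_ideal U.
  split; first by exists 0%N; case: (c_ideal 0%N).
  - move=> a b [n ca] [m cb]; exists (maxn n m).
    case: (c_ideal (maxn n m)) => _ cD _; apply: cD.
    + by apply: c_mono ca; rewrite leq_maxl.
    + by apply: c_mono cb; rewrite leq_maxr.
  - by move=> r a [n ca]; exists n; case: (c_ideal n) => _ _ cM; apply: cM.
have [k [g Ug]] := noethR U U_ideal.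
have g_in_U i : U (g i).
  apply/Ug; exists (fun j => (j == i)%:R).
  by rewrite (bigD1 i) //= eqxx mul1r big1 ?addr0 // => j /negbTE ->; rewrite mul0r.
have [stage g_stage] : exists stage : 'I_k -> nat, forall i, c (stage i) (g i) :=
  ClassicalEpsilon.choice _ g_in_U.
exists (\max_(i < k) stage i)%N => n x cx.
have /Ug [a ->] : U x by exists n.
apply: ideal_sum => // i; apply: c_mono (g_stage i).
exact: (leq_bigmax i).
Qed.

Lemma noeth_ind (P : (R -> Prop) -> Prop) :
  noetherian R ->
  (forall I, is_ideal I ->
     (forall J, is_ideal J -> included I J -> (exists x, J x /\ ~ I x) -> P J) ->
     P I) ->
  forall I, is_ideal I -> P I.
Proof.
move=> noethR step I0 I0_ideal; apply: NNPP => notP0.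
(* from a counterexample, choice builds a strictly increasing chain of
   counterexamples, contradicting the ascending chain condition *)
pose bad := {I : R -> Prop | is_ideal I /\ ~ P I}.
have grow (s : bad) : exists s' : bad, included (sval s) (sval s') /\
    exists x, sval s' x /\ ~ sval s x.
  case: s => I [I_ideal notPI] /=; apply: NNPP => no_bigger; apply: notPI.
  apply: step => // J J_ideal IJ newJ; apply: NNPP => notPJ.
  by apply: no_bigger; exists (exist _ J (conj J_ideal notPJ)).
have [next next_grows] := ClassicalEpsilon.choice _ grow.
pose c n := sval (iter n next (exist _ I0 (conj I0_ideal notP0))).
have c_ideal n : is_ideal (c n) by rewrite /c; case: (iter n next _) => ? [].
have c_mono n m : (n <= m)%N -> included (c n) (c m).
  move=> /subnKC <-; elim: (m - n)%N => [|k IH]; first by rewrite addn0.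
  by move=> x /IH; rewrite addnS; apply: (proj1 (next_grows _)).
have [N cN] := noetherian_chain noethR c_ideal c_mono.
have [_ [x [cx ncx]]] := next_grows (iter N next (exist _ I0 (conj I0_ideal notP0))).
exact: ncx (cN N.+1 x cx).
Qed.

Definition adjoin I (c : R) : R -> Prop := fun x => exists i r, I i /\ x = i + r * c.

Lemma adjoin_ideal I c : is_ideal I -> is_ideal (adjoin I c).
Proof.
case=> I0 ID IM; split.
- by exists 0, 0; rewrite mul0r addr0.
- move=> _ _ [i [r [Ii ->]]] [j [s [Ij ->]]]; exists (i + j), (r + s).
  by split; [apply: ID | rewrite mulrDl addrACA].
- move=> r _ [i [s [Ii ->]]]; exists (r * i), (r * s).
  by split; [apply: IM | rewrite mulrDr mulrA].
Qed.

Lemma adjoin_incl I c : included I (adjoin I c).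
Proof. by move=> x Ix; exists x, 0; rewrite mul0r addr0. Qed.

Lemma adjoin_mem I c : is_ideal I -> adjoin I c c.
Proof. by case=> I0 _ _; exists 0, 1; rewrite mul1r add0r. Qed.

Lemma adjoin_least I c J : is_ideal J -> included I J -> J c -> included (adjoin I c) J.
Proof. by case=> _ JD JM IJ Jc _ [i [r [Ii ->]]]; apply: JD; [apply: IJ | apply: JM]. Qed.

Lemma exists_maximal I :
  noetherian R -> is_ideal I -> ~ I 1 -> exists m, is_maximal m /\ included I m.
Proof.
move=> noethR; move: I; apply: noeth_ind => // I I_ideal IH I1.
case: (classic (is_maximal I)) => [Imax|notImax]; first by exists I; split => // x.
have [J [J_ideal [IJ [JnI J1]]]] :
    exists J, is_ideal J /\ included I J /\ ~ (forall x, J x <-> I x) /\ ~ J 1.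
  apply: NNPP => none; apply: notImax; split => // J J_ideal IJ.
  case: (classic (J 1)) => J1; [by right | left].
  by apply: NNPP => JnI; apply: none; exists J.
have [x [Jx nIx]] : exists x, J x /\ ~ I x.
  apply: NNPP => none; apply: JnI => x; split => [Jx|]; last exact: IJ.
  by apply: NNPP => nIx; apply: none; exists x.
have [m [mmax Jm]] := IH J J_ideal IJ (ex_intro _ x (conj Jx nIx)) J1.
by exists m; split => // y /IJ /Jm.
Qed.

Lemma maximal_prime (m : R -> Prop) : is_maximal m -> is_prime m.
Proof.
move=> [m_ideal m1 mmax]; split => // a b mab.
apply: NNPP => /not_or_and [ma mb].
have [same|[i [r [mi one]]]] :=
  mmax _ (adjoin_ideal a m_ideal) (@adjoin_incl m a).
  by apply: ma; apply/same; apply: adjoin_mem.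
(* b = b (i + r a) lies in m *)
apply: mb; have [_ mD mM] := m_ideal.
have -> : b = b * i + r * (a * b).
  by rewrite -{1}[b]mulr1 one mulrDr mulrCA [b * a]mulrC.
by apply: mD; apply: mM.
Qed.

Lemma primes_over J :
  noetherian R -> is_ideal J ->
  exists L : list (R -> Prop),
    (forall p, List.In p L -> is_prime p /\ included J p) /\
    forall q, is_prime q -> included J q -> exists p, List.In p L /\ included p q.
Proof.
move=> noethR; move: J; apply: noeth_ind => // I I_ideal IH.
case: (classic (I 1)) => [I1|nI1].
  by exists nil; split => // q [_ q1 _] Iq; case: q1; apply: Iq.
case: (classic (is_prime I)) => [Iprime|notIprime].
  exists [:: I]; split; first by move=> p [<-|[]] //; split => // x.
  by move=> q _ Iq; exists I; split; [left | exact: Iq].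
have [a [b [Iab [nIa nIb]]]] : exists a b, I (a * b) /\ ~ I a /\ ~ I b.
  apply: NNPP => none; apply: notIprime; split => // a b Iab.
  by apply: NNPP => /not_or_and [nIa nIb]; apply: none; exists a, b.
(* the primes over I containing c are the primes over I + Rc *)
have over_adjoin c : ~ I c -> exists L : list (R -> Prop),
    (forall p, List.In p L -> is_prime p /\ included I p) /\
    forall q, is_prime q -> included I q -> q c -> exists p, List.In p L /\ included p q.
  move=> nIc; have Ic_ideal := adjoin_ideal c I_ideal.
  have [L [L_primes L_cover]] := IH _ Ic_ideal (@adjoin_incl I c)
    (ex_intro _ c (conj (adjoin_mem c I_ideal) nIc)).
  exists L; split.
    by move=> p /L_primes [pP Icp]; split => // x /(@adjoin_incl I c) /Icp.
  by move=> q qP Iq qc; apply: L_cover => //; apply: adjoin_least => //; case: qP.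
have [La [La_primes La_cover]] := over_adjoin a nIa.
have [Lb [Lb_primes Lb_cover]] := over_adjoin b nIb.
exists (La ++ Lb); split.
  by move=> p /(List.in_app_or La Lb p) [/La_primes|/Lb_primes].
move=> q qP Iq; have [_ _ /(_ a b (Iq _ Iab)) [qa|qb]] := qP.
- have [p [inLa pq]] := La_cover q qP Iq qa.
  by exists p; split => //; apply: List.in_or_app; left.
- have [p [inLb pq]] := Lb_cover q qP Iq qb.
  by exists p; split => //; apply: List.in_or_app; right.
Qed.

Lemma prime_above_finite_meet (S : (R -> Prop) -> Prop) p :
  finite_ideal_set S -> (forall q, S q -> is_ideal q) -> is_prime p ->
  included (fun r => forall q, S q -> q r) p -> exists q, S q /\ included q p.
Proof.
move=> [n [f f_covers]] S_ideals pP meet_p; apply: NNPP => none.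
have outside i : exists a, ~ p a /\
    forall q, S q -> (forall x, q x <-> f i x) -> q a.
  case: (classic (exists q, S q /\ forall x, q x <-> f i x)) => [[q [Sq qfi]]|no_q].
    have [a [qa npa]] : exists a, q a /\ ~ p a.
      apply: NNPP => all_in; apply: none; exists q; split => // x qx.
      by apply: NNPP => npx; apply: all_in; exists x.
    by exists a; split => // q' _ q'fi; apply/q'fi/qfi.
  exists 1; split; first by case: pP.
  by move=> q Sq qfi; case: no_q; exists q.
have [a a_spec] := ClassicalEpsilon.choice _ outside.
apply: (prime_prod pP (fun i => proj1 (a_spec i))); apply: meet_p => q Sq.
have [i qfi] := f_covers q Sq.
rewrite (bigD1 i) //=; apply: ideal_mulr; first exact: S_ideals.
exact: (proj2 (a_spec i) q Sq qfi).
Qed.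

Lemma finite_ideal_set_list (S : (R -> Prop) -> Prop) (L : list (R -> Prop)) :
  (forall p, S p -> exists p', List.In p' L /\ forall x, p x <-> p' x) ->
  finite_ideal_set S.
Proof.
move=> S_in_L; exists (length L), (fun i => List.nth i L (fun _ => False)).
move=> p /S_in_L [p' [inL pp']].
have [k [/ltP kL kp']] := List.In_nth L p' (fun _ => False) inL.
by exists (Ordinal kL) => x /=; rewrite kp'.
Qed.

End Ideals.

Lemma min_in_list {T : Type} (le : T -> T -> Prop) :
  (forall x, le x x) -> (forall x y z, le x y -> le y z -> le x z) ->
  forall (s : list T) x, List.In x s ->
  exists y, List.In y s /\ le y x /\ forall z, List.In z s -> le z y -> le y z.
Proof.
move=> le_refl le_trans; elim=> [|a s IH] x //=.
(* a minimal element of s stays minimal in a :: s, unless a is strictly below it *)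
have extend y : List.In y s -> (forall z, List.In z s -> le z y -> le y z) ->
    exists y', List.In y' (a :: s) /\ le y' y /\
      forall z, List.In z (a :: s) -> le z y' -> le y' z.
  move=> sy ymin; case: (classic (le a y /\ ~ le y a)) => [[ay nya]|not_below].
    exists a; split; [by left | split => //].
    move=> z [<-|sz] za //; case: nya.
    exact: le_trans (ymin z sz (le_trans _ _ _ za ay)) za.
  exists y; split; [by right | split => //].
  move=> z [<-|sz] zy; last exact: ymin.
  by apply: NNPP => nya; apply: not_below.
move=> [<-|sx]; last first.
  have [y [sy [yx ymin]]] := IH x sx.
  have [y' [y'in [y'y y'min]]] := extend y sy ymin.
  by exists y'; split => //; split => //; apply: le_trans y'y yx.
case: (classic (exists z, List.In z s /\ le z a)) => [[z [sz za]]|none].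
  have [y [sy [yz ymin]]] := IH z sz.
  have [y' [y'in [y'y y'min]]] := extend y sy ymin.
  by exists y'; split => //; split => //; apply: le_trans y'y (le_trans _ _ _ yz za).
exists a; split; [by left | split => //].
by move=> z [<-|sz] za //; case: none; exists z.
Qed.

Section Modules.
Variables (R : comPzRingType) (M : lmodType R).
Implicit Types (N K : M -> Prop) (p q m : R -> Prop).

Definition span n (g : 'I_n -> M) : M -> Prop :=
  fun y => exists c : 'I_n -> R, y = \sum_(i < n) c i *: g i.

Lemma span_submod n (g : 'I_n -> M) : is_submod (span g).
Proof.
split.
- by exists (fun _ => 0); rewrite big1 // => i _; rewrite scale0r.
- move=> _ _ [c ->] [d ->]; exists (fun i => c i + d i); rewrite -big_split /=.
  by apply: eq_bigr => i _; rewrite scalerDl.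
- move=> r _ [c ->]; exists (fun i => r * c i); rewrite scaler_sumr.
  by apply: eq_bigr => i _; rewrite scalerA.
Qed.

Lemma span_gen n (g : 'I_n -> M) i : span g (g i).
Proof.
exists (fun j => (j == i)%:R).
by rewrite (bigD1 i) //= eqxx scale1r big1 ?addr0 // => j /negbTE ->; rewrite scale0r.
Qed.

Lemma span_fg n (g : 'I_n -> M) : submod_fg (span g).
Proof. by exists n, g. Qed.

Definition addsub N K : M -> Prop := fun y => exists a b, N a /\ K b /\ y = a + b.

Lemma addsub_submod N K : is_submod N -> is_submod K -> is_submod (addsub N K).
Proof.
case=> N0 ND NZ [K0 KD KZ]; split.
- by exists 0, 0; rewrite addr0.
- move=> _ _ [a [b [Na [Kb ->]]]] [a' [b' [Na' [Kb' ->]]]].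
  by exists (a + a'), (b + b'); do !split; [apply: ND | apply: KD | rewrite addrACA].
- move=> r _ [a [b [Na [Kb ->]]]]; exists (r *: a), (r *: b).
  by do !split; [apply: NZ | apply: KZ | rewrite scalerDr].
Qed.

Lemma addsub_fg N K : submod_fg N -> submod_fg K -> submod_fg (addsub N K).
Proof.
move=> [n [g Ng]] [k [h Kh]].
pose gh i := match split i with inl a => g a | inr b => h b end.
have ghl a : gh (lshift k a) = g a by rewrite /gh (unsplitK (inl _ a)).
have ghr b : gh (rshift n b) = h b by rewrite /gh (unsplitK (inr _ b)).
exists (n + k)%N, gh => y; split.
  move=> [_ [_ [/Ng [c ->] [/Kh [d ->] ->]]]].
  exists (fun i => match split i with inl a => c a | inr b => d b end).
  rewrite big_split_ord /=; congr (_ + _); apply: eq_bigr => i _.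
    by rewrite ghl (unsplitK (inl _ i)).
  by rewrite ghr (unsplitK (inr _ i)).
move=> [e ->]; rewrite big_split_ord /=.
exists (\sum_(i < n) e (lshift k i) *: gh (lshift k i)),
       (\sum_(i < k) e (rshift n i) *: gh (rshift n i)); do !split.
- by apply/Ng; exists (fun i => e (lshift k i)); apply: eq_bigr => i _; rewrite ghl.
- by apply/Kh; exists (fun i => e (rshift n i)); apply: eq_bigr => i _; rewrite ghr.
Qed.

(* (M/N)_q <> 0: some x is not killed modulo N by any element outside q *)
Definition quot_supp N q : Prop := exists x : M, forall u, ~ q u -> ~ N (u *: x).

(* membership in Supp(M/N) with the irrelevant denominator removed *)
Lemma in_supp_quotE N q : in_supp_quot N q <-> is_prime q /\ quot_supp N q.
Proof.
split; first by move=> [qP [x [s [_ xs]]]]; split => //; exists x.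
by move=> [qP [x xq]]; split => //; exists x, 1; split => //; case: qP.
Qed.

Lemma min_quot_ideal N q : in_min_quot N q -> is_ideal q.
Proof. by case=> [[[]]]. Qed.

(* a sum of fractions v_i/t with a common denominator is (t^(n-1) sum v_i)/t^n,
   stated up to the factor t so as to avoid division *)
Lemma frac_big_const n (v : 'I_n -> M) (t : R) :
  (\big[@frac_add R M/frac_zero M]_(i < n) (v i, t)).2 = t ^+ n /\
  t *: (\big[@frac_add R M/frac_zero M]_(i < n) (v i, t)).1 = t ^+ n *: \sum_(i < n) v i.
Proof.
elim: n v => [|n IH] v; first by rewrite !big_ord0 /= expr0 scaler0 scale1r.
rewrite !big_ord_recl /=; have [E2 E1] := IH (fun i => v (lift ord0 i)).
split; first by rewrite E2 exprS.
by rewrite scalerDr E2 !scalerA -exprS -scalerA E1 scalerA -exprS scalerDr.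
Qed.

(* If M is finitely generated, so is its localization at any proper p,
   by the images g_i/1 of the generators. *)
Lemma fg_loc_fg p : ~ p 1 -> module_fg M -> loc_fg M p.
Proof.
move=> p1 [n [g gen]]; exists n, g, (fun _ => 1); split => // y t pt.
have [c yc] := gen y; exists c, (fun _ => t); split => //.
have [E2 E1] := frac_big_const (fun i => c i *: g i) t.
exists 1; split => //; rewrite /frac_scale /=.
under eq_bigr => i _ do rewrite mulr1.
by rewrite scale1r E2 E1 -yc subrr.
Qed.

Lemma loc_fg_gens p : is_prime p -> loc_fg M p ->
  exists n (g : 'I_n -> M), forall y, exists u, ~ p u /\ span g (u *: y).
Proof.
move=> pP [n [g [d [pd loc]]]]; have [_ p1 _] := pP.
exists n, g => y; have [a [b [pb [v [pv yB]]]]] := loc y 1 p1.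
set B := \big[_/_]_(i < n) _ in yB.
have pB2 : ~ p B.2.
  rewrite /B (big_morph snd (id1 := 1) (op1 := *%R)) //.
  by apply: prime_prod => // i /=; apply: prime_mul.
have spanB1 : span g B.1.
  rewrite /B; apply: (big_ind (fun a : M * R => span g a.1)) => /=.
  - by case: (span_submod g).
  - by case: (span_submod g) => _ sD sZ a1 a2 ? ?; apply: sD; apply: sZ.
  - by move=> i _; case: (span_submod g) => _ _ sZ; apply: sZ; apply: span_gen.
exists (v * B.2); split; first exact: prime_mul.
move: yB => /=; rewrite scale1r scalerBr => /eqP; rewrite subr_eq0 => /eqP.
by rewrite -scalerA => ->; case: (span_submod g) => _ _ sZ; apply: sZ.
Qed.

End Modules.

Section SupportAwayFrom.
Variables (R : comPzRingType) (M : lmodType R).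
Variables (N : M -> Prop) (U : R -> Prop) (n : nat) (g : 'I_n -> M).
Hypotheses (N_submod : is_submod N) (U1 : U 1)
  (UM : forall a b, U a -> U b -> U (a * b))
  (gen : forall y, exists u, U u /\ span g (u *: y)).

Definition avoids (q : R -> Prop) := forall u, U u -> ~ q u.

Definition supp_ideal : R -> Prop :=
  fun r => exists u, U u /\ forall i, N ((u * r) *: g i).

Lemma supp_ideal_ideal : is_ideal supp_ideal.
Proof.
have [N0 ND NZ] := N_submod; split.
- by exists 1; split => // i; rewrite mulr0 scale0r.
- move=> r s [u1 [Uu1 N1]] [u2 [Uu2 N2]]; exists (u1 * u2); split; first exact: UM.
  move=> i; have -> : (u1 * u2 * (r + s)) *: g i =
      u2 *: ((u1 * r) *: g i) + u1 *: ((u2 * s) *: g i).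
    rewrite !scalerA -scalerDl; congr (_ *: _).
    by rewrite mulrDr [u1 * u2]mulrC -!mulrA [u1 * (u2 * s)]mulrCA.
  by apply: ND; apply: NZ.
- by move=> r' r [u [Uu Nr]]; exists u; split => // i; rewrite mulrCA -scalerA; apply: NZ.
Qed.

Lemma quot_suppE q : is_prime q -> avoids q ->
  quot_supp N q <-> included supp_ideal q.
Proof.
move=> qP qU; have [N0 ND NZ] := N_submod; split.
  (* r in J outside q would give u r v outside q with u r v x in N,
     where v x lies in the span of the g_i *)
  move=> [x xq] r [u [Uu Nr]]; apply: NNPP => qr.
  have [v [Uv [c vx]]] := gen x.
  apply: (xq (u * r * v)).
    by apply: prime_mul => //; [apply: prime_mul => //; apply: qU | apply: qU].
  rewrite -scalerA vx scaler_sumr; apply: (big_ind N) => // i _.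
  by rewrite scalerA mulrC -scalerA; apply: NZ.
(* otherwise every g_i is killed by some w_i outside q, and so is M by their product *)
move=> Jq; apply: NNPP => notsupp.
have killed i : exists w, ~ q w /\ N (w *: g i).
  apply: NNPP => none; apply: notsupp; exists (g i) => w qw Nw.
  by apply: none; exists w.
have [w w_spec] := ClassicalEpsilon.choice _ killed.
apply: (prime_prod qP (fun i => proj1 (w_spec i))); apply: Jq.
exists 1; split => // i; rewrite mul1r (bigD1 i) //= mulrC -scalerA.
by apply: NZ; apply: (proj2 (w_spec i)).
Qed.

Hypothesis noethR : noetherian R.

Lemma below_min_supp q :
  in_supp_quot N q -> avoids q -> exists p, in_min_quot N p /\ included p q.
Proof.
move=> /in_supp_quotE [qP qsupp] qU.
have [L [L_primes L_cover]] := primes_over noethR supp_ideal_ideal.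
have [p0 [p0L p0q]] := L_cover q qP ((quot_suppE qP qU).1 qsupp).
have [p [pL [pp0 pmin]]] := min_in_list (le := included) (fun _ _ px => px)
   (fun _ _ _ xy yz t xt => yz t (xy t xt)) p0L.
have pq : included p q by move=> x /pp0 /p0q.
have pU : forall p', included p' q -> avoids p' by move=> p' p'q u /qU + /p'q.
have [pP Jp] := L_primes p pL.
exists p; split => //; split.
  by apply/in_supp_quotE; split => //; apply/(quot_suppE pP (pU p pq)).
move=> p' /in_supp_quotE [p'P p'supp] p'p.
have p'q : included p' q by move=> x /p'p /pq.
have [p'' [p''L p''p']] := L_cover p' p'P ((quot_suppE p'P (pU p' p'q)).1 p'supp).
by move=> x /(pmin p'' p''L (fun y h => p'p y (p''p' y h))) /p''p'.
Qed.

Lemma min_supp_list : exists L : list (R -> Prop),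
  forall p, in_min_quot N p -> avoids p ->
    exists p', List.In p' L /\ forall x, p x <-> p' x.
Proof.
have [L [L_primes L_cover]] := primes_over noethR supp_ideal_ideal.
exists L => p [/in_supp_quotE [pP psupp] pmin] pU.
have [p' [p'L p'p]] := L_cover p pP ((quot_suppE pP pU).1 psupp).
have [p'P Jp'] := L_primes p' p'L.
have p'U : avoids p' by move=> u /pU + /p'p.
have pp' := pmin p' (proj2 (in_supp_quotE N p')
  (conj p'P ((quot_suppE p'P p'U).2 Jp'))) p'p.
by exists p'; split => // x; split; [apply: pp' | apply: p'p].
Qed.

End SupportAwayFrom.

(* (i) => (ii): with U = {1} every prime avoids U, so min_supp_list bounds
   all of Min(M/N). *)
Lemma fg_min_finite (R : comPzRingType) (M : lmodType R) (N : M -> Prop) :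
  noetherian R -> module_fg M -> is_submod N -> finite_ideal_set (in_min_quot N).
Proof.
move=> noethR [n [g gen]] Nsub.
have gen1 y : exists u : R, u = 1 /\ span g (u *: y).
  by exists 1; rewrite scale1r; split => //; apply: gen.
have one_mul (a b : R) : a = 1 -> b = 1 -> a * b = 1 by move=> -> ->; rewrite mulr1.
have [L L_min] := min_supp_list (U := fun u => u = 1) Nsub (erefl _) one_mul gen1 noethR.
apply: (finite_ideal_set_list (L := L)) => p pmin; apply: L_min => // u ->.
by case: pmin => [[[_ p1 _] _] _].
Qed.

Section Converse.
Variables (R : comPzRingType) (M : lmodType R).
Hypotheses (noethR : noetherian R)
  (loc_max : forall m : R -> Prop, is_maximal m -> loc_fg M m)
  (min_fin : forall N : M -> Prop, is_submod N -> submod_fg N ->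
     finite_ideal_set (in_min_quot N)).
Implicit Types (N : M -> Prop) (p q : R -> Prop).

(* Every prime of Supp(M/N) contains a minimal one: localize at a maximal
   ideal m above it, where M is finitely generated up to R \ m. *)
Lemma supp_above_min N q :
  is_submod N -> in_supp_quot N q -> exists p, in_min_quot N p /\ included p q.
Proof.
move=> Nsub qsupp; have [[q_ideal q1 _] _] := qsupp.
have [m [mmax qm]] := exists_maximal noethR q_ideal q1.
have mP := maximal_prime mmax; have [_ m1 _] := mP.
have [n [g gen]] := loc_fg_gens mP (loc_max mmax).
apply: (below_min_supp (U := fun u => ~ m u) Nsub m1 (fun a b => prime_mul mP)
  gen noethR qsupp).
by move=> u mu /qm.
Qed.

Lemma no_min_full N : is_submod N -> (forall p, ~ in_min_quot N p) -> forall y, N y.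
Proof.
move=> Nsub nomin y; apply: NNPP => Ny; have [N0 ND NZ] := Nsub.
have ann_ideal : is_ideal (fun u => N (u *: y)).
  split; first by rewrite scale0r.
  - by move=> a b Na Nb; rewrite scalerDl; apply: ND.
  - by move=> r a Na; rewrite -scalerA; apply: NZ.
have ann1 : ~ N (1 *: y) by rewrite scale1r.
have [m [mmax ann_m]] := exists_maximal noethR ann_ideal ann1.
have msupp : in_supp_quot N m.
  by apply/in_supp_quotE; split; [exact: maximal_prime | exists y => u mu /ann_m].
by have [p [pmin _]] := supp_above_min Nsub msupp; apply: nomin pmin.
Qed.

Definition min_meet N : R -> Prop := fun r => forall p, in_min_quot N p -> p r.

Lemma min_meet_ideal N : is_ideal (min_meet N).
Proof.
split=> [p /min_quot_ideal [] // | a b Na Nb p pmin | r a Na p pmin].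
- by have [_ pD _] := min_quot_ideal pmin; apply: pD; [apply: Na | apply: Nb].
- by have [_ _ pM] := min_quot_ideal pmin; apply: pM; apply: Na.
Qed.

(* a minimal prime of M/N' lies above a minimal prime of M/N when N <= N' *)
Lemma min_meet_mono N N' :
  is_submod N -> included N N' -> included (min_meet N) (min_meet N').
Proof.
move=> Nsub NN' r Nr p' [/in_supp_quotE [p'P [x xp']] _].
have [p [pmin pp']] : exists p, in_min_quot N p /\ included p p'.
  apply: supp_above_min => //; apply/in_supp_quotE; split => //.
  by exists x => u p'u /NN'; apply: xp'.
by apply: pp'; apply: Nr.
Qed.

(* Adding to N generators of M_m, for a maximal m above a minimal prime p0
   of M/N, gives N' whose min_meet escapes p0: otherwise prime avoidance
   over the finite set Min(M/N') puts some p' of Min(M/N') inside m, while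
   (M/N')_m = 0. *)
Lemma min_meet_escapes N p0 :
  is_submod N -> submod_fg N -> in_min_quot N p0 ->
  exists N', [/\ is_submod N', submod_fg N', included N N'
                 & ~ included (min_meet N') p0].
Proof.
move=> Nsub Nfg [/in_supp_quotE [p0P _] _]; have [p0_ideal p01 _] := p0P.
have [m [mmax p0m]] := exists_maximal noethR p0_ideal p01.
have [k [gK genK]] := loc_fg_gens (maximal_prime mmax) (loc_max mmax).
pose N' := addsub N (span gK).
have N'sub : is_submod N' := addsub_submod Nsub (span_submod gK).
have N'fg : submod_fg N' := addsub_fg Nfg (span_fg gK).
exists N'; split => //.
  by move=> a Na; exists a, 0; do !split => //; [case: (span_submod gK) | rewrite addr0].
move=> meet_p0.
have [p' [p'min p'p0]] := prime_above_finite_meet (min_fin N'sub N'fg)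
  (@min_quot_ideal _ _ N') p0P meet_p0.
have [/in_supp_quotE [_ [x xp']] _] := p'min.
have [u [mu Ku]] := genK x.
apply: (xp' u); first by move=> /p'p0 /p0m.
by exists 0, (u *: x); do !split => //; [case: Nsub | rewrite add0r].
Qed.

(* (ii) => (i): by noetherian induction on an ideal I below min_meet N for
   finitely generated N, min_meet N can be enlarged until Min(M/N) is empty,
   and then N = M is finitely generated. *)
Lemma fg_of_loc_min : module_fg M.
Proof.
have grow : forall I, is_ideal I -> forall N, is_submod N -> submod_fg N ->
    included I (min_meet N) -> module_fg M.
  apply: noeth_ind => // I I_ideal IH N Nsub Nfg Imeet.
  case: (classic (exists p0, in_min_quot N p0)) => [[p0 p0min]|nomin]; last first.
    have [n [g Ng]] := Nfg; exists n, g => y; apply/Ng.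
    by apply: no_min_full => // p pmin; apply: nomin; exists p.
  have [N' [N'sub N'fg NN' escape]] := min_meet_escapes Nsub Nfg p0min.
  have [x [N'x p0x]] : exists x, min_meet N' x /\ ~ p0 x.
    apply: NNPP => none; apply: escape => x N'x.
    by apply: NNPP => p0x; apply: none; exists x.
  apply: (IH _ (min_meet_ideal N') _ _ N' N'sub N'fg) => //.
  - by move=> y /Imeet; apply: min_meet_mono.
  - by exists x; split => // /Imeet /(_ p0 p0min).
pose N0 := span (fun i : 'I_0 => 0 : M).
by apply: (grow _ (min_meet_ideal N0) N0 (span_submod _) (span_fg _)).
Qed.

End Converse.

Theorem proposition2p1 (R : comPzRingType) (M : lmodType R) :
  noetherian R ->
  (module_fg M <->
   ((forall m : R -> Prop, is_maximal m -> loc_fg M m) /\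
    (forall N : M -> Prop, is_submod N -> submod_fg N ->
       finite_ideal_set (in_min_quot N)))).
Proof.
move=> noethR; split => [fgM | [loc_max min_fin]].
- split=> [m /maximal_prime [_ m1 _] | N Nsub _]; first exact: fg_loc_fg.
  exact: fg_min_finite.
- exact: fg_of_loc_min.
Qed.
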